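(* Let $R$, $a$, $t$, $t_i$, $H_i$ and the polynomials $q_{\mu,i}$, $z_{\mu,i}$, $\sigma_{\mu,i}$ be as in the context, let $I=\langle t_1(X_1),\dots,t_r(X_r)\rangle\lhd R[X_1,\dots,X_r]$, and for $\mu\in H_1\times\dots\times H_r$ let $$h_\mu=\prod_{i=1}^r\frac{t_i(X_i)}{q_{\mu,i}(X_i)}\prod_{i=2}^r\sigma_{\mu,i},\qquad I_\mu=\langle q_{\mu,1},z_{\mu,2},\dots,z_{\mu,r}\rangle .$$ Then the annihilator of the ideal $\langle h_\mu+I\rangle$ in $R[X_1,\dots,X_r]/I$ is $(I_\mu+I)/I$.
   Context: $R$ is a finite commutative chain ring (finite commutative local ring whose ideals are totally ordered) with maximal ideal $M=\langle a\rangle$, $a$ of nilpotency index $t$, residue field $\mathbb F_q$; reduction mod $M$ is denoted $r\mapsto \bar r$ and extended coefficientwise to polynomials. $\mathbb F$ is an algebraic closure of $\mathbb F_q$. For $i=1,\dots,r$, $t_i(X_i)\in R[X_i]$ is monic with $\bar t_i$ square-free, and $H_i\subseteq\mathbb F$ is the set of roots of $\bar t_i$. For $\mu=(\mu_1,\dots,\mu_r)\in H_1\times\dots\times H_r$: $p_{\mu,i}$ is the minimal polynomial of $\mu_i$ over $\mathbb F_q$; for $i\ge2$, $w_{\mu,i}$ is the minimal polynomial of $\mu_i$ over $\mathbb F_q(\mu_1,\dots,\mu_{i-1})$ and $\pi_{\mu,i}=p_{\mu,i}/w_{\mu,i}$. $q_{\mu,i}\in R[X_i]$ is the unique monic factor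 of $t_i$ with $\bar q_{\mu,i}=p_{\mu,i}$ (Hensel's lemma). With $R_{i-1}=R[X_1,\dots,X_{i-1}]/\langle q_{\mu,1},z_{\mu,2},\dots,z_{\mu,i-1}\rangle$ (a local ring with residue field $\mathbb F_q(\mu_1,\dots,\mu_{i-1})$), Hensel's lemma gives a factorization $q_{\mu,i}=z_{\mu,i}\sigma_{\mu,i}$ in $R_{i-1}[X_i]$ into monic coprime factors reducing to $w_{\mu,i}$ and $\pi_{\mu,i}$; $z_{\mu,i},\sigma_{\mu,i}$ are regarded as polynomials in $R[X_1,\dots,X_i]$ by replacing the images of $X_j$ in $R_{i-1}$ by $X_j$. *)

From HB Require Import structures.
From mathcomp Require Import all_boot all_order all_algebra all_field.
From mathcomp Require Import mpoly.

Set Implicit Arguments.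
Unset Strict Implicit.
Unset Printing Implicit Defensive.

Import GRing.Theory.
Local Open Scope ring_scope.

Definition is_ideal (R : finComUnitRingType) (S : {set R}) : Prop :=
  [/\ 0 \in S,
      (forall x y, x \in S -> y \in S -> x + y \in S) &
      (forall c x, x \in S -> c * x \in S)].

(* Local ring: the non-units form an ideal (equivalently a unique maximal ideal). *)
Definition local_ring (R : finComUnitRingType) : Prop :=
  forall x y : R, x \isn't a GRing.unit -> y \isn't a GRing.unit ->
    x + y \isn't a GRing.unit.

Definition chain_ring (R : finComUnitRingType) : Prop :=
  local_ring R /\
  forall S T : {set R}, is_ideal S -> is_ideal T -> S \subset T \/ T \subset S.

Definition squarefree (k : fieldType) (p : {poly k}) : Prop :=
  p != 0 /\ forall d : {poly k}, (d * d %| p)%R -> (size d <= 1)%N.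

Definition liftX (R : comNzRingType) (r : nat) (i : 'I_r) (p : {poly R})
  : {mpoly R[r]} := (map_poly (@mpolyC r R) p).['X_i].

Definition in_ideal (A : comNzRingType) (I : finType) (P : pred I)
  (g : I -> A) (x : A) : Prop :=
  exists c : I -> A, x = \sum_(j | P j) c j * g j.

(* the multivariate polynomial P only involves variables X_j with j < i
   (0-based indices), i.e. P lies in R[X_0, ..., X_(i-1)]. *)
Definition vars_lt (R : comNzRingType) (r : nat) (i : nat) (P : {mpoly R[r]})
  : Prop :=
  forall m, m \in msupp P -> forall j : 'I_r, (i <= j)%N -> m j = 0%N.

(* Congruence P = Q in the ring R[X_0..X_(i-1)] / <g j | j < i>, for P, Q in
   R[X_0..X_(i-1)] (coefficients of the ideal combination also taken in
   R[X_0..X_(i-1)]). *)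
Definition congr_lt (R : comNzRingType) (r : nat) (i : nat)
  (g : 'I_r -> {mpoly R[r]}) (P Q : {mpoly R[r]}) : Prop :=
  exists c : 'I_r -> {mpoly R[r]},
    (forall j, vars_lt i (c j)) /\ P - Q = \sum_(j : 'I_r | (j < i)%N) c j * g j.

(* coefficientwise version, for polynomials in X_i over R[X_0..X_(i-1)] *)
Definition pcongr_lt (R : comNzRingType) (r : nat) (i : nat)
  (g : 'I_r -> {mpoly R[r]}) (P Q : {poly {mpoly R[r]}}) : Prop :=
  forall n : nat, congr_lt i g P`_n Q`_n.

Definition pvars_lt (R : comNzRingType) (r : nat) (i : nat)
  (P : {poly {mpoly R[r]}}) : Prop := forall n : nat, vars_lt i P`_n.

(* The residue map R[X_0..X_(r-1)] -> F: reduce coefficients mod M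
   (via red : R -> k, then k -> F) and evaluate X_j at mu_j. *)
Definition resmap (R : comNzRingType) (k : fieldType) (F : fieldExtType k)
  (red : R -> k) (r : nat) (mu : 'I_r -> F) (P : {mpoly R[r]}) : F :=
  (map_mpoly (fun c => in_alg F (red c)) P).@[mu].

(* Generators of I_mu (0-based): q_{mu,1}(X_1) for index 0, and
   z_{mu,i+1} (as a polynomial in X_0..X_i) for index i >= 1. *)
Definition gens (R : comNzRingType) (r : nat) (q : 'I_r -> {poly R})
  (z : 'I_r -> {poly {mpoly R[r]}}) (j : 'I_r) : {mpoly R[r]} :=
  if val j == 0%N then liftX j (q j) else (z j).['X_j].

Definition mu_before (F : Type) (r : nat) (mu : 'I_r -> F) (i : nat) : seq F :=
  [seq mu j | j <- [seq j <- enum 'I_r | (val j < i)%N]].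

(** The inclusion [(I_mu + I)/I ⊆ Ann(h)] is proved along the tower of
   generators: [q_1 h] is divisible by [t_1], and for [i >= 2] the relation
   [z_i sigma_i = q_i] modulo [<q_1, z_2, ..., z_(i-1)>] reduces [z_i h] to
   [q_i h], which is divisible by [t_i], plus multiples of earlier
   generators, which kill [h] by induction.
   For the converse, [h] is a unit modulo [I_mu]: [sigma_i] is coprime to
   [z_i] by construction, and [t_i/q_i] is coprime to [q_i] because [t_i] is
   square-free mod [M]; a Bezout relation mod [M] lifts to [R[X]] since the
   kernel of the reduction is nil.  Thus from [b h = 1] mod [I_mu] and
   [f h ∈ I] we get [f = f (1 - b h) + b f h ∈ I_mu + I]. *)

From HB Require Import structures.
From mathcomp Require Import all_boot all_order all_algebra all_field.
From mathcomp Require Import mpoly ring.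

Set Implicit Arguments.
Unset Strict Implicit.
Unset Printing Implicit Defensive.

Import GRing.Theory.
Local Open Scope ring_scope.

Section IdealMembership.
Variables (A : comNzRingType) (I : finType) (P : pred I) (g : I -> A).

Lemma in_ideal0 : in_ideal P g 0.
Proof. by exists (fun _ => 0); rewrite big1 // => j _; rewrite mul0r. Qed.

Lemma in_idealD x y : in_ideal P g x -> in_ideal P g y -> in_ideal P g (x + y).
Proof.
move=> [c ->] [d ->]; exists (fun j => c j + d j).
by rewrite -big_split /=; apply: eq_bigr => j _; rewrite mulrDl.
Qed.

Lemma in_idealMl y x : in_ideal P g x -> in_ideal P g (y * x).
Proof.
move=> [c ->]; exists (fun j => y * c j).
by rewrite mulr_sumr; apply: eq_bigr => j _; rewrite mulrA.
Qed.

Lemma in_idealMr y x : in_ideal P g x -> in_ideal P g (x * y).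
Proof. by rewrite mulrC; apply: in_idealMl. Qed.

Lemma in_idealN x : in_ideal P g x -> in_ideal P g (- x).
Proof. by rewrite -mulN1r; apply: in_idealMl. Qed.

Lemma in_idealB x y : in_ideal P g x -> in_ideal P g y -> in_ideal P g (x - y).
Proof. by move=> Ix /in_idealN; apply: in_idealD. Qed.

Lemma in_ideal_sum (J : Type) (s : seq J) (Q : pred J) (F : J -> A) :
  (forall j, Q j -> in_ideal P g (F j)) -> in_ideal P g (\sum_(j <- s | Q j) F j).
Proof. by move=> IF; apply: big_ind => //; [apply: in_ideal0 | apply: in_idealD]. Qed.

Lemma in_ideal_gen j : P j -> in_ideal P g (g j).
Proof.
move=> Pj; exists (fun i => (i == j)%:R).
rewrite (bigD1 j) //= eqxx mul1r big1 ?addr0 // => i /andP [_ /negbTE ->].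
by rewrite mul0r.
Qed.

Lemma in_ideal_predT x : in_ideal P g x -> in_ideal predT g x.
Proof.
move=> [c ->]; exists (fun j => if P j then c j else 0).
rewrite big_mkcond; apply: eq_bigr => j _.
by case: (P j); rewrite ?mul0r.
Qed.

Definition unit_mod (x : A) := exists b, in_ideal P g (1 - b * x).

Lemma unit_mod1 : unit_mod 1.
Proof. by exists 1; rewrite mulr1 subrr; apply: in_ideal0. Qed.

Lemma unit_modM x y : unit_mod x -> unit_mod y -> unit_mod (x * y).
Proof.
move=> [b Ib] [c Ic]; exists (b * c).
have -> : 1 - b * c * (x * y) = (1 - b * x) + (b * x) * (1 - c * y).
  by rewrite mulrBr mulr1 addrA subrK mulrACA.
by apply: in_idealD => //; apply: in_idealMl.
Qed.

Lemma unit_mod_prod (J : Type) (s : seq J) (Q : pred J) (F : J -> A) :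
  (forall j, Q j -> unit_mod (F j)) -> unit_mod (\prod_(j <- s | Q j) F j).
Proof. by move=> UF; apply: big_ind => //; [apply: unit_mod1 | apply: unit_modM]. Qed.

Lemma unit_mod_Bezout x y a b :
  in_ideal P g y -> in_ideal P g (a * y + b * x - 1) -> unit_mod x.
Proof.
move=> Iy IB; exists b.
have -> : 1 - b * x = a * y - (a * y + b * x - 1) by ring.
by apply: in_idealB => //; apply: in_idealMl.
Qed.

End IdealMembership.

Lemma pcongr_lt_horner (R : comNzRingType) (r i : nat) (g : 'I_r -> {mpoly R[r]})
    (p q : {poly {mpoly R[r]}}) (x : {mpoly R[r]}) :
  pcongr_lt i g p q -> in_ideal (fun j : 'I_r => (j < i)%N) g (p.[x] - q.[x]).
Proof.
move=> pq; rewrite -hornerN -hornerD horner_coef.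
apply: in_ideal_sum => n _; apply: in_idealMr.
by have [c [_ pqc]] := pq n; exists c; rewrite coefB.
Qed.

Section Annihilator.
Variables (A : comNzRingType) (KI KJ : finType) (gI : KI -> A) (gJ : KJ -> A).
Variable h : A.
Hypothesis h_unit : unit_mod predT gJ h.
Hypothesis gJ_h : forall j, in_ideal predT gI (gJ j * h).

Lemma annihilator_in_ideal f :
  (forall u, in_ideal predT gI (f * (u * h))) <->
  exists a b, [/\ in_ideal predT gJ a, in_ideal predT gI b & f = a + b].
Proof.
split=> [fh | [a [b [[c ->] Ib ->]]] u].
  have [b Ib] := h_unit; exists (f * (1 - b * h)), (b * (f * h)).
  split; first exact: in_idealMl.
    by apply: in_idealMl; rewrite -[h]mul1r; apply: fh.
  by rewrite mulrBr mulr1 mulrCA subrK.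
rewrite mulrDl; apply: in_idealD; last exact: in_idealMr.
rewrite big_distrl /=; apply: in_ideal_sum => j _.
by rewrite mulrACA; apply: in_idealMl.
Qed.

End Annihilator.

Lemma prod_ord_split (A : comNzRingType) (r l n : nat) (F : 'I_r -> A) :
  (l <= n)%N ->
  \prod_(m : 'I_r | (m < n)%N) F m =
    \prod_(m : 'I_r | (m < l)%N) F m * \prod_(m : 'I_r | (l <= m < n)%N) F m.
Proof.
move=> ln; rewrite (bigID (fun m : 'I_r => (m < l)%N)) /=; congr (_ * _).
  by apply: eq_bigl => m; apply/andP/idP => [[] | ml] //; rewrite (leq_trans ml).
by apply: eq_bigl => m; rewrite -leqNgt andbC.
Qed.

(* The tower abstracted: [C] stands for [prod_i t_i/q_i], [s j] for
   [sigma_j] and [g j] for the [j]-th generator of [I_mu]. *)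
Section TriangularAnnihilation.
Variables (A : comNzRingType) (K : finType) (gI : K -> A).
Variables (r : nat) (g s q : 'I_r -> A) (C : A).
Hypothesis qC_in : forall j, in_ideal predT gI (q j * C).
Hypothesis gs_q : forall j : 'I_r,
  in_ideal (fun l : 'I_r => (l < j)%N) g (g j * s j - q j).

Lemma gen_mul_partial_prod (j : 'I_r) :
  in_ideal predT gI (g j * (C * \prod_(m : 'I_r | (m < j.+1)%N) s m)).
Proof.
have [n] := ubnP j; elim: n j => // n IH j /[!ltnS] jn.
rewrite (prod_ord_split _ (leqnSn j)).
rewrite (big_pred1 j (P := fun m : 'I_r => (j <= m < j.+1)%N)); last first.
  by move=> m /=; rewrite ltnS -eqn_leq eq_sym.
set P := \prod_(m : 'I_r | _) _.
have -> : g j * (C * (P * s j)) = (g j * s j - q j) * (C * P) + q j * C * P.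
  by ring.
apply: in_idealD; last exact: in_idealMr.
have [c ->] := gs_q j; rewrite big_distrl /=; apply: in_ideal_sum => l lj.
rewrite /P (prod_ord_split _ lj) -mulrA; apply: in_idealMl.
by rewrite (mulrA C) mulrA; apply: in_idealMr; apply: IH; apply: leq_trans jn.
Qed.

Lemma gen_mul_prod (j : 'I_r) : in_ideal predT gI (g j * (C * \prod_m s m)).
Proof.
have -> : \prod_m s m = \prod_(m : 'I_r | (m < r)%N) s m.
  by apply: eq_bigl => m; rewrite ltn_ord.
rewrite (prod_ord_split _ (ltn_ord j)).
by rewrite (mulrA C) mulrA; apply: in_idealMr; apply: gen_mul_partial_prod.
Qed.

End TriangularAnnihilation.

Definition is_nilpotent (A : comNzRingType) (x : A) := exists n, x ^+ n = 0.

Lemma is_nilpotent0 (A : comNzRingType) : is_nilpotent (0 : A).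
Proof. by exists 1%N; rewrite expr1. Qed.

Lemma is_nilpotentD (A : comNzRingType) (x y : A) :
  is_nilpotent x -> is_nilpotent y -> is_nilpotent (x + y).
Proof.
move=> [a xa0] [b yb0]; exists (a + b)%N.
rewrite exprDn big1 // => [[i /= _]] _.
have [bi | ib] := leqP b i.
  by rewrite -(subnKC bi) exprD yb0 !mul0r mulr0 mul0rn.
have ai : (a <= a + b - i)%N by rewrite -addnBA ?leq_addr // ltnW.
by rewrite -(subnKC ai) exprD xa0 !mul0r mul0rn.
Qed.

Lemma is_nilpotent_inv1B (A : comNzRingType) (x : A) :
  is_nilpotent x -> exists w, w * (1 - x) = 1.
Proof.
move=> [n xn0]; exists (\sum_(i < n) x ^+ i).
by rewrite mulrC -opprB mulNr -subrX1 xn0 sub0r opprK.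
Qed.

Lemma nat_fun_repeats (T : finType) (f : nat -> T) :
  exists a b, (a < b)%N /\ f a = f b.
Proof.
have /injectivePn [a [b ab eq_ab]] : ~~ injectiveb (fun i : 'I_#|T|.+1 => f i).
  by apply/negP => /injectiveP /leq_card; rewrite card_ord ltnn.
have [lt | gt | eq] := ltngtP a b; [by exists a, b | by exists b, a |].
by move: ab; rewrite -val_eqE /= eq eqxx.
Qed.

Section FiniteLocalRing.
Variables (R : finComUnitRingType) (R_local : local_ring R).

Lemma local_unit1B (y : R) : y \isn't a GRing.unit -> 1 - y \is a GRing.unit.
Proof.
move=> yNU; apply/negPn/negP => /(R_local yNU).
by rewrite addrC subrK unitr1.
Qed.

Lemma local_nonunit_nilpotent (x : R) : x \isn't a GRing.unit -> is_nilpotent x.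
Proof.
move=> xNU; have [a [b [lt_ab eq_ab]]] := nat_fun_repeats (GRing.exp x); exists a.
have y_nonunit : x ^+ (b - a) \isn't a GRing.unit by rewrite unitrX_pos ?subn_gt0.
have : x ^+ a * (1 - x ^+ (b - a)) = 0.
  by rewrite mulrBr -exprD (subnKC (ltnW lt_ab)) -eq_ab mulr1 subrr.
by move/(canRL (mulrK (local_unit1B y_nonunit))); rewrite mul0r.
Qed.

Variables (k : fieldType) (red : {rmorphism R -> k}).
Hypothesis red_surj : forall y : k, exists x : R, red x = y.

Lemma red_ker_nilpotent x : red x = 0 -> is_nilpotent x.
Proof.
move=> rx0; apply: local_nonunit_nilpotent; apply/negP => /(rmorph_unit red).
by rewrite rx0 unitr0.
Qed.

Lemma map_red_ker_nilpotent (p : {poly R}) : map_poly red p = 0 -> is_nilpotent p.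
Proof.
move=> rp0; rewrite -[p]coefK poly_def.
apply: big_ind; [exact: is_nilpotent0 | exact: is_nilpotentD |] => i _.
have [n pin0] : is_nilpotent p`_i.
  by apply: red_ker_nilpotent; rewrite -coef_map rp0 coef0.
by exists n; rewrite exprZn pin0 scale0r.
Qed.

Lemma map_red_surj (u : {poly k}) : exists U : {poly R}, map_poly red U = u.
Proof.
have [lift liftK] : {lift : k -> R | cancel lift red}.
  have ex_pre y : exists x, red x == y by have [x <-] := red_surj y; exists x.
  by exists (fun y => xchoose (ex_pre y)) => y; apply/eqP/(xchooseP (ex_pre y)).
exists (\poly_(i < size u) lift u`_i); apply/polyP => i.
rewrite coef_map coef_poly; case: ltnP => [_ | ui] /=; first exact: liftK.
by rewrite rmorph0 nth_default.
Qed.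

Lemma coprimep_map_red_Bezout (a b : {poly R}) :
  coprimep (map_poly red a) (map_poly red b) ->
  exists U V : {poly R}, U * a + V * b = 1.
Proof.
move=> /Bezout_eq1_coprimepP [[u v] /= uv1].
have [U0 U0u] := map_red_surj u; have [V0 V0v] := map_red_surj v.
have m_nil : is_nilpotent (1 - (U0 * a + V0 * b)).
  apply: map_red_ker_nilpotent.
  by rewrite rmorphB rmorph1 rmorphD !rmorphM /= U0u V0v uv1 subrr.
have [w] := is_nilpotent_inv1B m_nil; rewrite opprB addrC subrK => w_inv.
by exists (w * U0), (w * V0); rewrite -!mulrA -mulrDr.
Qed.

End FiniteLocalRing.

Lemma squarefree_coprimep (k : fieldType) (a b : {poly k}) :
  squarefree (a * b) -> coprimep a b.
Proof.
move=> [ab0 sqf]; rewrite coprimep_def.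
have : (size (gcdp a b) <= 1)%N by apply: sqf; rewrite dvdp_mul ?dvdp_gcdl ?dvdp_gcdr.
rewrite leq_eqVlt ltnS leqn0 size_poly_eq0 gcdp_eq0.
by case/orP => // /andP [/eqP a0 _]; move: ab0; rewrite a0 mul0r eqxx.
Qed.

Lemma liftXM (R : comNzRingType) (r : nat) (i : 'I_r) (p q : {poly R}) :
  liftX i (p * q) = liftX i p * liftX i q.
Proof. by rewrite /liftX rmorphM hornerM. Qed.

Lemma liftX_Bezout (R : comNzRingType) (r : nat) (i : 'I_r) (u v p c : {poly R}) :
  u * p + v * c = 1 -> liftX i u * liftX i p + liftX i v * liftX i c = 1.
Proof.
move=> uv1; rewrite -!liftXM /liftX -hornerD -rmorphD uv1.
by rewrite rmorph1 -polyC1 hornerC.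
Qed.

Lemma liftX_unit_mod (R : finComUnitRingType) (R_local : local_ring R)
    (k : fieldType) (red : {rmorphism R -> k})
    (red_surj : forall y : k, exists x : R, red x = y)
    (r : nat) (K : finType) (g : K -> {mpoly R[r]}) (i : 'I_r) (p c : {poly R}) :
  squarefree (map_poly red (p * c)) -> in_ideal predT g (liftX i p) ->
  unit_mod predT g (liftX i c).
Proof.
rewrite rmorphM => /squarefree_coprimep /(coprimep_map_red_Bezout R_local red_surj).
move=> [u [v /(liftX_Bezout i) uv1]] Ip.
apply: (unit_mod_Bezout (a := liftX i u) (b := liftX i v) Ip).
by rewrite uv1 subrr; apply: in_ideal0.
Qed.

Section Tower.
Variables (R : comNzRingType) (r : nat) (q : 'I_r -> {poly R}).
Variables (z s : 'I_r -> {poly {mpoly R[r]}}).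
Hypothesis hz_fact : forall i : 'I_r, (0 < i)%N ->
  pcongr_lt i (gens q z) (map_poly (@mpolyC r R) (q i)) (z i * s i).
Hypothesis hz_coprime : forall i : 'I_r, (0 < i)%N ->
  exists A B : {poly {mpoly R[r]}}, [/\ pvars_lt i A, pvars_lt i B &
    pcongr_lt i (gens q z) (A * z i + B * s i) 1].

(* [sigma_j] evaluated at [X_j], with [sigma_0 := 1]: the first generator of
   [I_mu] is [q_0] itself. *)
Definition sigmaX (j : 'I_r) : {mpoly R[r]} := if (0 < j)%N then (s j).['X_j] else 1.

Lemma gens_gt0 (j : 'I_r) : (0 < j)%N -> gens q z j = (z j).['X_j].
Proof. by rewrite /gens lt0n => /negbTE ->. Qed.

Lemma gens_eq0 (j : 'I_r) : j = 0%N :> nat -> gens q z j = liftX j (q j).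
Proof. by move=> j0; rewrite /gens ifT //; apply/eqP. Qed.

Lemma gens_sigmaX_congr (j : 'I_r) :
  in_ideal (fun l : 'I_r => (l < j)%N) (gens q z)
    (gens q z j * sigmaX j - liftX j (q j)).
Proof.
rewrite /sigmaX; case: (posnP j) => [j0 | j_gt0].
  by rewrite gens_eq0 // mulr1 subrr; apply: in_ideal0.
rewrite gens_gt0 // -hornerM -opprB; apply: in_idealN.
exact: pcongr_lt_horner (hz_fact j_gt0).
Qed.

Lemma liftX_q_in_gens (j : 'I_r) : in_ideal predT (gens q z) (liftX j (q j)).
Proof.
rewrite -[liftX j (q j)](subKr (gens q z j * sigmaX j)).
apply: in_idealB; last exact: in_ideal_predT (gens_sigmaX_congr j).
by apply: in_idealMr; apply: in_ideal_gen.
Qed.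

Lemma sigmaX_unit_mod (j : 'I_r) : unit_mod predT (gens q z) (sigmaX j).
Proof.
rewrite /sigmaX; case: ifP => [j_gt0 | _]; last exact: unit_mod1.
have [A [B [_ _ AB1]]] := hz_coprime j_gt0.
have gen_j : in_ideal predT (gens q z) (gens q z j) by apply: in_ideal_gen.
apply: (unit_mod_Bezout (a := A.['X_j]) (b := B.['X_j]) gen_j).
have := pcongr_lt_horner 'X_j AB1.
by rewrite hornerD !hornerM -polyC1 hornerC -gens_gt0 // => /in_ideal_predT.
Qed.

End Tower.

Theorem mainTheorem2
  (R : finComUnitRingType) (HR : chain_ring R)
  (k : fieldType) (red : {rmorphism R -> k}) (Hred : forall y : k, exists x : R, red x = y)
  (F : fieldExtType k)
  (r : nat) (hr : (0 < r)%N)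
  (t : 'I_r -> {poly R})
  (ht_monic : forall i, t i \is monic)
  (ht_sqf : forall i, squarefree (map_poly red (t i)))
  (ht_split : forall i, exists rs : seq F,
      map_poly (fun c => in_alg F (red c)) (t i) = \prod_(x <- rs) ('X - x%:P))
  (mu : 'I_r -> F)
  (hmu : forall i, root (map_poly (fun c => in_alg F (red c)) (t i)) (mu i))
  (q cof : 'I_r -> {poly R})
  (hq_monic : forall i, q i \is monic)
  (hq_fact : forall i, t i = q i * cof i)
  (hq_red : forall i,
      map_poly (fun c => in_alg F (red c)) (q i) = minPoly 1%VS (mu i))
  (z s : 'I_r -> {poly {mpoly R[r]}})
  (hz_vars : forall i : 'I_r, (0 < i)%N -> pvars_lt i (z i) /\ pvars_lt i (s i))
  (hz_monic : forall i : 'I_r, (0 < i)%N -> z i \is monic /\ s i \is monic)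
  (hz_fact : forall i : 'I_r, (0 < i)%N ->
      pcongr_lt i (gens q z) (map_poly (@mpolyC r R) (q i)) (z i * s i))
  (hz_coprime : forall i : 'I_r, (0 < i)%N ->
      exists A B : {poly {mpoly R[r]}}, [/\ pvars_lt i A, pvars_lt i B &
        pcongr_lt i (gens q z) (A * z i + B * s i) 1])
  (hz_red : forall i : 'I_r, (0 < i)%N ->
      map_poly (resmap red mu) (z i) = minPoly <<1%VS & mu_before mu i>>%VS (mu i))
  (hs_red : forall i : 'I_r, (0 < i)%N ->
      map_poly (resmap red mu) (s i) =
        minPoly 1%VS (mu i) %/ minPoly <<1%VS & mu_before mu i>>%VS (mu i)) :
  let h : {mpoly R[r]} :=
    (\prod_(j : 'I_r) liftX j (cof j)) * \prod_(j : 'I_r | (0 < j)%N) (s j).['X_j] in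
  forall f : {mpoly R[r]},
    (forall u : {mpoly R[r]},
        in_ideal predT (fun j : 'I_r => liftX j (t j)) (f * (u * h)))
    <->
    (exists a b : {mpoly R[r]},
        [/\ in_ideal predT (gens q z) a,
            in_ideal predT (fun j : 'I_r => liftX j (t j)) b &
            f = a + b]).
Proof.
move=> h f; rewrite /h [\prod_(j : 'I_r | (0 < j)%N) _]big_mkcond /=.
apply: annihilator_in_ideal => [|j].
  apply: unit_modM; apply: unit_mod_prod => j _.
    apply: (liftX_unit_mod HR.1 Hred (p := q j)).
      by rewrite -hq_fact.
    exact: liftX_q_in_gens hz_fact j.
  exact: sigmaX_unit_mod hz_coprime j.
apply: (gen_mul_prod (q := fun j => liftX j (q j))) => [l|l].
  rewrite (bigD1 l) //= mulrA -liftXM -hq_fact.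
  by apply: in_idealMr; apply: in_ideal_gen.
exact: gens_sigmaX_congr hz_fact l.
Qed.
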